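(* Let $\mathcal{G}$ be a GBS graph of groups and $w=a_0^{k_0}y_1a_1^{k_1}\cdots y_na_n^{k_n}$ a $\mathcal{G}$-factorization. Define the relation $\sim_{\mathcal{C}}$ on $\{1,\dots,n\}$ by $i\sim_{\mathcal{C}}j$ iff $y_i=\bar y_j$ and: if $i<j$ then $\rho(w_{i,j-1})=0$ and $k_{i,j-1}\in\beta_{y_i}\mathbb{Z}$; if $j<i$ then $\rho(w_{j,i-1})=0$ and $k_{j,i-1}\in\beta_{y_j}\mathbb{Z}$. If $i\sim_{\mathcal{C}}\ell$, $\ell\sim_{\mathcal{C}}m$ and $m\sim_{\mathcal{C}}j$, then $i\sim_{\mathcal{C}}j$.
   Context: $\mathcal{G}$ consists of a finite connected graph $Y$ (vertices $V(Y)$, edges $E(Y)$, maps $\iota,\tau:E(Y)\to V(Y)$, fixed-point-free involution $y\mapsto\bar y$ with $\iota(\bar y)=\tau(y)$) and integers $\alpha_y,\beta_y\in\mathbb{Z}\setminus\{0\}$ with $\alpha_y=\beta_{\bar y}$. A $\mathcal{G}$-factorization is a word $a_0^{k_0}y_1a_1^{k_1}\cdots y_na_n^{k_n}$ with $y_i\in E(Y)$, $a_i\in V(Y)$, $k_i\in\mathbb{Z}$, $\iota(y_i)=a_{i-1}$, $\tau(y_i)=a_i$ and $a_n=a_0$. For $0\le i\le j\le n$: $w_{i,j}=a_i^{k_i}y_{i+1}a_{i+1}^{k_{i+1}}\cdots y_ja_j^{k_j}$ and $k_{i,j}=\sum_{\nu=i}^{j}k_\nu\prod_{\mu=i+1}^{\nu}\alpha_{y_\mu}/\beta_{y_\mu}\in\mathbb{Q}$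 (so $k_{i,j}\in\beta\mathbb{Z}$ means $k_{i,j}$ is an integer multiple of $\beta$). Fix an orientation $D\subseteq E(Y)$ (containing exactly one of $y,\bar y$ for each edge $y$); $\rho$ maps words over $E(Y)\cup\{a^k\}$ to $\mathbb{Z}^D$ additively, with $\rho(a^k)=0$, $\rho(y)=e_y$ and $\rho(\bar y)=-e_y$ for $y\in D$ ($e_y$ the unit vector at $y$); i.e. $\rho$ counts exponent sums of edges. *)

From HB Require Import structures.
From mathcomp Require Import all_boot all_order all_algebra.
Set Implicit Arguments. Unset Strict Implicit. Unset Printing Implicit Defensive.
Import Order.TTheory GRing.Theory Num.Theory.
Local Open Scope ring_scope.

Definition graph_adj (V E : finType) (iota tau : E -> V) : rel V :=
  fun a b => [exists e, (iota e == a) && (tau e == b)].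

Definition is_GBS (V E : finType) (iota tau : E -> V) (bar : E -> E)
    (alpha beta : E -> int) : Prop :=
  (0 < #|V|)%N /\
  (forall u v, connect (graph_adj iota tau) u v) /\
  [/\ (forall y, bar (bar y) = y),
      (forall y, bar y != y),
      (forall y, iota (bar y) = tau y),
      (forall y, alpha y != 0 /\ beta y != 0)
    & (forall y, alpha y = beta (bar y))].

Definition is_orientation (E : finType) (bar : E -> E) (D : {set E}) : Prop :=
  forall y, (y \in D) = ~~ (bar y \in D).

(* A G-factorization a_0^{k_0} y_1 a_1^{k_1} ... y_n a_n^{k_n}, encoded by
   a : nat -> V (indices 0..n), y : nat -> E (indices 1..n), k : nat -> int
   (indices 0..n); values outside these ranges are irrelevant. *)
Definition is_factorization (V E : finType) (iota tau : E -> V)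
    (n : nat) (a : nat -> V) (y : nat -> E) : Prop :=
  (forall i, (1 <= i <= n)%N -> iota (y i) = a i.-1 /\ tau (y i) = a i)
  /\ a n = a 0%N.

Definition kk (E : finType) (alpha beta : E -> int) (y : nat -> E)
    (k : nat -> int) (i j : nat) : rat :=
  \sum_(i <= nu < j.+1)
     (k nu)%:~R * \prod_(i.+1 <= mu < nu.+1)
        ((alpha (y mu))%:~R / (beta (y mu))%:~R).

(* rho(w_{i,j}) in Z^D, represented as a function E -> int (zero off D):
   exponent sum of the edges y_{i+1}, ..., y_j. *)
Definition rho (E : finType) (bar : E -> E) (D : {set E}) (y : nat -> E)
    (i j : nat) : E -> int :=
  fun e => if e \in D then
             \sum_(i.+1 <= mu < j.+1)
               (((y mu == e) : nat)%:Z - ((y mu == bar e) : nat)%:Z)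
           else 0.

Definition rho_zero (E : finType) (bar : E -> E) (D : {set E}) (y : nat -> E)
    (i j : nat) : Prop := forall e, rho bar D y i j e = 0.

Definition in_multZ (q : rat) (b : int) : Prop := exists m : int, q = (m * b)%:~R.

Definition simC (E : finType) (bar : E -> E) (alpha beta : E -> int)
    (D : {set E}) (n : nat) (y : nat -> E) (k : nat -> int) (i j : nat) : Prop :=
  [/\ (1 <= i <= n)%N, (1 <= j <= n)%N, y i = bar (y j),
      ((i < j)%N -> rho_zero bar D y i j.-1 /\
                    in_multZ (kk alpha beta y k i j.-1) (beta (y i)))
    & ((j < i)%N -> rho_zero bar D y j i.-1 /\
                    in_multZ (kk alpha beta y k j i.-1) (beta (y j)))].

(* Attach to each position p of the factorization the vector
   G(p) = rho(w_{0,p}) + rho(w_{0,p-1}), the rational L(p) = beta_{y_p} T(p) and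
   K(p) = sum_{nu<p} k_nu T(nu), where T(nu) is the product of the ratios
   alpha_{y_mu}/beta_{y_mu} for mu <= nu.  For p < q with y_p = bar y_q, the
   conditions rho(w_{p,q-1}) = 0 and k_{p,q-1} in beta_{y_p} Z are equivalent to
   G(p) = G(q), L(p) = L(q) and K(q) - K(p) in L(p) Z: a subword with zero
   exponent sums has ratio product 1, and k_{p,q-1} T(p) = K(q) - K(p).  The
   latter relation is an equivalence, and along i ~ l ~ m ~ j the edge flips
   three times, so y_i = bar y_j and i ~_C j. *)

From mathcomp Require Import all_boot all_order all_algebra.
From mathcomp Require Import zify ring.
Set Implicit Arguments. Unset Strict Implicit. Unset Printing Implicit Defensive.
Import Order.TTheory GRing.Theory Num.Theory.
Local Open Scope ring_scope.

Section FactorizationPositions.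

Variables (E : finType) (bar : E -> E) (alpha beta : E -> int) (D : {set E}).
Variables (y : nat -> E) (k : nat -> int).

Hypothesis bar_inv : involutive bar.
Hypothesis bar_neq : forall e, bar e != e.
Hypothesis D_orient : is_orientation bar D.
Hypothesis alpha_beta_neq0 : forall e, alpha e != 0 /\ beta e != 0.
Hypothesis alpha_beta_bar : forall e, alpha e = beta (bar e).

Definition edge_sign (mu : nat) (e : E) : int :=
  ((y mu == e) : nat)%:Z - ((y mu == bar e) : nat)%:Z.

Lemma rhoE p q e : rho bar D y p q e =
  if e \in D then \sum_(p.+1 <= mu < q.+1) edge_sign mu e else 0.
Proof. by []. Qed.

Lemma rho_cat p q r e : (p <= q <= r)%N ->
  rho bar D y p r e = rho bar D y p q e + rho bar D y q r e.
Proof.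
case/andP=> pq qr; rewrite !rhoE; case: (e \in D); last by rewrite addr0.
by rewrite (big_cat_nat _ (n := q.+1)).
Qed.

Lemma rho_step p e : (0 < p)%N ->
  rho bar D y p.-1 p e = if e \in D then edge_sign p e else 0.
Proof. by move=> p_gt0; rewrite rhoE prednK // big_nat1. Qed.

Lemma edge_sign_bar p q e : y p = bar (y q) -> edge_sign p e = - edge_sign q e.
Proof.
move=> ypq; rewrite /edge_sign ypq (inj_eq (inv_inj bar_inv)).
rewrite -{1}(bar_inv e) (inj_eq (inv_inj bar_inv)); lia.
Qed.

(* Twice the exponent sum of the prefix of [w] ending in the middle of [y_p]. *)
Definition mid_rho (p : nat) (e : E) : int := rho bar D y 0 p e + rho bar D y 0 p.-1 e.

Lemma mid_rho_bar p q e : (0 < p < q)%N -> y p = bar (y q) ->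
  mid_rho q e = mid_rho p e + 2 * rho bar D y p q.-1 e.
Proof.
move=> /andP[p_gt0 pq] ypq; rewrite /mid_rho.
have -> : rho bar D y 0 q e = rho bar D y 0 q.-1 e + rho bar D y q.-1 q e.
  by apply: rho_cat; lia.
have -> : rho bar D y 0 q.-1 e = rho bar D y 0 p e + rho bar D y p q.-1 e.
  by apply: rho_cat; lia.
have -> : rho bar D y 0 p e = rho bar D y 0 p.-1 e + rho bar D y p.-1 p e.
  by apply: rho_cat; lia.
rewrite !rho_step; try lia.
by case: (e \in D); rewrite ?(edge_sign_bar e ypq); ring.
Qed.

Definition ratio (e : E) : rat := (alpha e)%:~R / (beta e)%:~R.

Lemma ratio_neq0 e : ratio e != 0.
Proof.
have [a_neq0 b_neq0] := alpha_beta_neq0 e.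
by rewrite mulf_neq0 ?invr_neq0 ?intr_eq0.
Qed.

Lemma ratio_bar e : ratio (bar e) = (ratio e)^-1.
Proof. by rewrite /ratio invf_div alpha_beta_bar bar_inv -alpha_beta_bar. Qed.

Lemma ratio_edge_sign mu : ratio (y mu) = \prod_(e in D) ratio e ^ edge_sign mu e.
Proof.
have signE e : e != y mu -> e != bar (y mu) -> edge_sign mu e = 0.
  move=> ne nbe; rewrite /edge_sign eq_sym (negbTE ne).
  suff -> : (y mu == bar e) = false by [].
  by apply: contraNF nbe => /eqP ->; rewrite bar_inv.
have [yD | ynD] := boolP (y mu \in D).
  rewrite (bigD1 (y mu)) //= big1 => [|e /andP[eD ne]]; last first.
    have [ebar|nbe] := eqVneq e (bar (y mu)); last by rewrite signE ?expr0z.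
    by move: yD; rewrite D_orient -ebar eD.
  by rewrite /edge_sign eqxx eq_sym (negbTE (bar_neq _)) mulr1 expr1z.
have byD : bar (y mu) \in D by rewrite D_orient bar_inv.
rewrite (bigD1 (bar (y mu))) //= big1 => [|e /andP[eD nbe]]; last first.
  by rewrite signE ?expr0z //; apply: contraNneq ynD => <-.
rewrite /edge_sign bar_inv eqxx eq_sym (negbTE (bar_neq _)) mulr1.
by rewrite exprN1 ratio_bar invrK.
Qed.

(* Thanks to [ratio (bar e) = (ratio e)^-1], the product of the ratios along a
   subword depends only on its exponent sums. *)
Lemma prod_ratio_rho p q :
  \prod_(p.+1 <= mu < q.+1) ratio (y mu) = \prod_(e in D) ratio e ^ rho bar D y p q e.
Proof.
under eq_bigr do rewrite ratio_edge_sign.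
rewrite exchange_big; apply: eq_bigr => e eD; rewrite rhoE eD.
have ratio_morph : {morph exprz (ratio e) : a b / a + b >-> a * b}.
  by move=> a b; rewrite expfzDr ?ratio_neq0.
by rewrite (big_morph _ ratio_morph (expr0z (ratio e))).
Qed.

Lemma prod_ratio_eq1 p q : rho_zero bar D y p q ->
  \prod_(p.+1 <= mu < q.+1) ratio (y mu) = 1.
Proof. by move=> rho0; rewrite prod_ratio_rho big1 // => e _; rewrite rho0. Qed.

Definition ratio_prefix (nu : nat) : rat := \prod_(1 <= mu < nu.+1) ratio (y mu).

Definition kprefix (q : nat) : rat := \sum_(0 <= nu < q) (k nu)%:~R * ratio_prefix nu.

Definition level (p : nat) : rat := (beta (y p))%:~R * ratio_prefix p.

Lemma ratio_prefix_cat p nu : (p <= nu)%N ->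
  ratio_prefix nu = ratio_prefix p * \prod_(p.+1 <= mu < nu.+1) ratio (y mu).
Proof. by move=> p_le_nu; rewrite /ratio_prefix (big_cat_nat _ (n := p.+1)). Qed.

Lemma ratio_prefix_neq0 nu : ratio_prefix nu != 0.
Proof. by rewrite /ratio_prefix prodf_seq_neq0; apply/allP => mu _; apply: ratio_neq0. Qed.

Lemma kk_ratio_prefix p q : (p < q)%N ->
  kk alpha beta y k p q.-1 * ratio_prefix p = kprefix q - kprefix p.
Proof.
move=> pq; rewrite /kk prednK; last by lia.
rewrite /kprefix (big_cat_nat _ (m := 0%N) (n := p) (p := q)) //=; last by lia.
rewrite addrC addrK mulr_suml; apply: eq_big_nat => nu /andP[p_le_nu _].
by rewrite (ratio_prefix_cat p_le_nu) mulrAC mulrA.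
Qed.

Lemma level_bar p q : (0 < p < q)%N -> y p = bar (y q) ->
  rho_zero bar D y p q.-1 -> level q = level p.
Proof.
move=> /andP[p_gt0 pq] ypq rho0.
have prefix_q1 : ratio_prefix q.-1 = ratio_prefix p.
  by rewrite (@ratio_prefix_cat p) ?prod_ratio_eq1 ?mulr1 //; lia.
have prefix_q : ratio_prefix q = ratio_prefix q.-1 * ratio (y q).
  by rewrite /ratio_prefix -(prednK (ltn_trans p_gt0 pq)) big_nat_recr.
have beta_q_neq0 : (beta (y q))%:~R != 0 :> rat.
  by rewrite intr_eq0; case: (alpha_beta_neq0 (y q)).
rewrite /level prefix_q prefix_q1 /ratio ypq -alpha_beta_bar.
by field.
Qed.

Definition pos_equiv (p q : nat) : Prop :=
  [/\ forall e, mid_rho p e = mid_rho q e, level p = level q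
    & exists m : int, kprefix q - kprefix p = m%:~R * level p].

Lemma pos_equiv_sym p q : pos_equiv p q -> pos_equiv q p.
Proof.
case=> mid_pq level_pq [m Km]; split=> //; exists (- m).
by rewrite -level_pq rmorphN mulNr -Km opprB.
Qed.

Lemma pos_equiv_trans p q r : pos_equiv p q -> pos_equiv q r -> pos_equiv p r.
Proof.
case=> mid_pq level_pq [m Km] [mid_qr level_qr [m' Km']].
split; first by move=> e; rewrite mid_pq mid_qr.
  by rewrite level_pq level_qr.
exists (m + m'); rewrite rmorphD mulrDl -Km level_pq -Km'; ring.
Qed.

Lemma pos_equivP p q : (0 < p < q)%N -> y p = bar (y q) ->
  pos_equiv p q <->
  rho_zero bar D y p q.-1 /\ in_multZ (kk alpha beta y k p q.-1) (beta (y p)).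
Proof.
move=> pq ypq; have p_lt_q : (p < q)%N by case/andP: pq.
split.
  case=> mid_pq _ [m Km]; split.
    by move=> e; have := mid_rho_bar e pq ypq; rewrite mid_pq; lia.
  exists m; apply: (mulIf (ratio_prefix_neq0 p)).
  by rewrite kk_ratio_prefix // Km intrM /level mulrA.
case=> rho0 [m kkE]; split.
- by move=> e; rewrite (mid_rho_bar e pq ypq) rho0 mulr0 addr0.
- by rewrite (level_bar pq ypq rho0).
- by exists m; rewrite -kk_ratio_prefix // kkE intrM /level mulrA.
Qed.

Variable n : nat.

Lemma simC_pos_equiv p q : simC bar alpha beta D n y k p q -> pos_equiv p q.
Proof.
case=> /andP[p_gt0 _] /andP[q_gt0 _] ypq simC_lt simC_gt.
have yqp : y q = bar (y p) by rewrite ypq bar_inv.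
case: (ltngtP p q) => [pq | qp | peq].
- by apply/pos_equivP; rewrite ?p_gt0 //; apply: simC_lt.
- by apply/pos_equiv_sym/pos_equivP; rewrite ?q_gt0 //; apply: simC_gt.
- by move: ypq; rewrite peq => /eqP; rewrite eq_sym (negbTE (bar_neq _)).
Qed.

Lemma simC_of_pos_equiv p q : (1 <= p <= n)%N -> (1 <= q <= n)%N ->
  y p = bar (y q) -> pos_equiv p q -> simC bar alpha beta D n y k p q.
Proof.
move=> /[dup] pn /andP[p_gt0 _] /[dup] qn /andP[q_gt0 _] ypq pq.
have yqp : y q = bar (y p) by rewrite ypq bar_inv.
split=> // [pq_lt | qp_lt].
- by apply/pos_equivP; rewrite ?p_gt0.
- by apply/pos_equivP; rewrite ?q_gt0 //; apply: pos_equiv_sym.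
Qed.

Lemma simC_trans3 i l m j :
  simC bar alpha beta D n y k i l -> simC bar alpha beta D n y k l m ->
  simC bar alpha beta D n y k m j -> simC bar alpha beta D n y k i j.
Proof.
move=> il lm mj.
have ij := pos_equiv_trans (pos_equiv_trans (simC_pos_equiv il) (simC_pos_equiv lm))
  (simC_pos_equiv mj).
case: il lm mj => i_range _ yil _ _ [_ _ ylm _ _] [_ j_range ymj _ _].
apply: simC_of_pos_equiv i_range j_range _ ij.
by rewrite yil ylm bar_inv ymj.
Qed.

End FactorizationPositions.

Theorem lemma3p4 (V E : finType) (iota tau : E -> V) (bar : E -> E)
    (alpha beta : E -> int) (D : {set E})
    (n : nat) (a : nat -> V) (y : nat -> E) (k : nat -> int)
    (i l m j : nat) :
  is_GBS iota tau bar alpha beta ->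
  is_orientation bar D ->
  is_factorization iota tau n a y ->
  simC bar alpha beta D n y k i l ->
  simC bar alpha beta D n y k l m ->
  simC bar alpha beta D n y k m j ->
  simC bar alpha beta D n y k i j.
Proof.
move=> [_ [_ [bar_inv bar_neq _ ab_neq0 ab_bar]]] D_orient _.
exact: simC_trans3.
Qed.
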